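(* Let $C$ be an ordinary non-singular plane quartic defined over $k$, let $\gamma\in\Gamma$, $Q\in\mathcal{D}_\gamma$, and let $\phi:C\to C_Q$ be an isomorphism with $\sigma\phi\circ\phi^{-1}=\gamma$. Let $\mathcal{B}$ be the set of bitangents of $C$. Then $\mathrm{Aut}_k(\mathcal{B})=\phi^{-1}\circ\Gamma_\gamma\circ\phi$. Moreover, if $C'$ is another ordinary non-singular plane quartic with $\phi(C')=C_{Q'}$ for some $Q'\in\mathcal{Q}$, then $$\mathrm{Isom}_k(C,C')=\phi^{-1}\circ\{\rho\in\Gamma_\gamma:\rho(Q)=Q'\}\circ\phi.$$ In particular $\mathrm{Aut}_k(C)=\phi^{-1}\circ\Gamma_\gamma(Q)\circ\phi$.
   Context: $k=\mathbb{F}_q$, $q$ a power of 2, $\sigma(a)=a^q$ the Frobenius acting coefficientwise. Isomorphisms between non-singular plane quartics are induced by unique elements of $\mathrm{PGL}_3(\overline{k})$; $\mathrm{Isom}_k(C,C')$ (resp. $\mathrm{Aut}_k(C)$) denotes those induced by elements of $\mathrm{PGL}_3(k)$. For a subset $\mathcal{B}$ of lines, $\mathrm{Aut}_k(\mathcal{B})=\{\rho\in\mathrm{PGL}_3(k):\rho(\mathcal{B})=\mathcal{B}\}$. For $\gamma\in\mathrm{PGL}_3(\overline{k})$ with rows $\ell_1,\ell_2,\ell_3$, $F^\gamma=F(\ell_1,\ell_2,\ell_3)$. $\mathcal{Q}$ is the set of quadratic forms $Q=ax^2+by^2+cz^2+dxy+eyz+fzx$ over $\overline{k}$ with $abc\ne0$,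 $a+b+d\ne0$, $b+c+e\ne0$, $a+c+f\ne0$, $a+b+c+d+e+f\ne1$; $C_Q:Q^2=xyz(x+y+z)$. $\Gamma=\mathrm{PGL}_3(\mathbb{F}_2)$; $H_\gamma$ defined by $\ell_1\ell_2\ell_3(\ell_1+\ell_2+\ell_3)=xyz(x+y+z)+H_\gamma^2$; $\gamma(Q)=Q^{\gamma^{-1}}+H_{\gamma^{-1}}$, so $\gamma(C_Q)=C_{\gamma(Q)}$. $\mathcal{D}_\gamma=\{Q\in\mathcal{Q}:\gamma(Q)=\sigma Q\}$. $\Gamma_\gamma$ is the centralizer of $\gamma$ in $\Gamma$ and $\Gamma_\gamma(Q)$ the stabilizer of $Q$ in $\Gamma_\gamma$. Ordinary means Jacobian of 2-rank 3. *)

From HB Require Import structures.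
From mathcomp Require Import all_boot all_order all_algebra.
From mathcomp Require Import mpoly.
Set Implicit Arguments. Unset Strict Implicit. Unset Printing Implicit Defensive.
Import Order.TTheory GRing.Theory.
Local Open Scope ring_scope.

Section Quartics.
Variable K : fieldType.

Definition form3 := {mpoly K[3]}.
Definition i0 : 'I_3 := @Ordinal 3 0 isT.
Definition i1 : 'I_3 := @Ordinal 3 1 isT.
Definition i2 : 'I_3 := @Ordinal 3 2 isT.
Definition vx : form3 := 'X_i0.
Definition vy : form3 := 'X_i1.
Definition vz : form3 := 'X_i2.

Definition homogeneous (d : nat) (p : form3) : bool := p \is ishomog1 d mdeg.

Definition frob (q : nat) (a : K) : K := a ^+ q.
Definition frob_mx (q : nat) (g : 'M[K]_3) : 'M[K]_3 := map_mx (frob q) g.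
Definition frob_form (q : nat) (F : form3) : form3 := map_mpoly (frob q) F.

(* F^g = F(l1,l2,l3), l_i the i-th row of g viewed as a linear form3 *)
Definition row_form (g : 'M[K]_3) (i : 'I_3) : form3 := \sum_(j < 3) g i j *: 'X_j.
Definition fsubst (F : form3) (g : 'M[K]_3) : form3 :=
  F \mPo [tuple row_form g i | i < 3].

(* points of P^2 are nonzero column vectors; F evaluated at P *)
Definition fev (F : form3) (P : 'cV[K]_3) : K := F.@[fun i => P i 0].

Definition nonsingular (F : form3) : Prop :=
  forall P : 'cV[K]_3, fev F P = 0 -> (forall i, fev (mderiv i F) P = 0) -> P = 0.
Definition plane_quartic (F : form3) : Prop := homogeneous 4 F /\ F != 0.
Definition nonsingular_plane_quartic (F : form3) : Prop :=
  plane_quartic F /\ nonsingular F.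

(* Hasse--Witt (Cartier--Manin) matrix of a plane quartic in characteristic 2:
   entry (i,j) = coefficient in F^(p-1) = F of x^(2 u_j - u_i), u_i = (1,1,1)+e_i. *)
Definition hw_mono (i j : 'I_3) : 'X_{1..3} :=
  [multinom (1 + 2 * (k == j) - (k == i))%N | k < 3].
Definition hasse_witt (F : form3) : 'M[K]_3 := \matrix_(i, j) F@_(hw_mono i j).
(* ordinary: Jacobian of 2-rank 3 (= genus), i.e. invertible Hasse--Witt matrix *)
Definition ordinary (F : form3) : Prop := \det (hasse_witt F) != 0.

Definition form_over_k (q : nat) (F : form3) : Prop :=
  forall m, frob q F@_m = F@_m.

(* PGL_3 : invertible matrices up to nonzero scalars *)
Definition pgl_eq (g h : 'M[K]_3) : Prop := exists c : K, c != 0 /\ g = c *: h.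
Definition pgl_over_k (q : nat) (g : 'M[K]_3) : Prop :=
  g \in unitmx /\ exists c : K, c != 0 /\ frob_mx q (c *: g) = c *: g.

(* g maps the curve F = 0 onto the curve F' = 0: P |-> g P; equivalently
   the equation of g(C) is F^(g^-1), which must be proportional to F'. *)
Definition maps_curve (g : 'M[K]_3) (F F' : form3) : Prop :=
  g \in unitmx /\ exists c : K, c != 0 /\ fsubst F (invmx g) = c *: F'.

Definition isom_k (q : nat) (F F' : form3) (g : 'M[K]_3) : Prop :=
  pgl_over_k q g /\ maps_curve g F F'.

(* lines are nonzero row vectors l (the line l P = 0); a line l is a bitangent
   of F if the restriction of F to l is the square of a binary form3, i.e. all
   intersection multiplicities of l with F are even. *)
Definition restrict (F : form3) (P0 P1 : 'cV[K]_3) : {mpoly K[2]} :=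
  F \mPo [tuple (P0 i 0 *: 'X_(@Ordinal 2 0 isT) + P1 i 0 *: 'X_(@Ordinal 2 1 isT)) | i < 3].
Definition bitangent (F : form3) (l : 'rV[K]_3) : Prop :=
  l != 0 /\ exists P0 P1 : 'cV[K]_3,
    [/\ l *m P0 = 0, l *m P1 = 0, \rank (row_mx P0 P1) = 2 &
        exists G : {mpoly K[2]}, restrict F P0 P1 = G ^+ 2].

(* rho(B) = B for the set B of bitangents; rho maps the line l to l rho^-1 *)
Definition preserves_bitangents (F : form3) (g : 'M[K]_3) : Prop :=
  forall l : 'rV[K]_3, bitangent F l <-> bitangent F (l *m invmx g).

Definition aut_k_bitangents (q : nat) (F : form3) (g : 'M[K]_3) : Prop :=
  pgl_over_k q g /\ preserves_bitangents F g.

Definition Tform : form3 := vx * vy * vz * (vx + vy + vz).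
Definition CQ (Q : form3) : form3 := Q ^+ 2 - Tform.

Definition mono2 (a b c : nat) : 'X_{1..3} :=
  [multinom (if k == i0 then a else if k == i1 then b else c) | k < 3].
Definition inQset (Q : form3) : Prop :=
  let a := Q@_(mono2 2 0 0) in let b := Q@_(mono2 0 2 0) in
  let c := Q@_(mono2 0 0 2) in let d := Q@_(mono2 1 1 0) in
  let e := Q@_(mono2 0 1 1) in let f := Q@_(mono2 1 0 1) in
  homogeneous 2 Q /\ a * b * c != 0 /\ a + b + d != 0 /\ b + c + e != 0 /\
      a + c + f != 0 /\ a + b + c + d + e + f != 1.

(* Gamma = PGL_3(F_2) = GL_3(F_2), realised as the invertible 0/1 matrices in K *)
Definition inGamma (g : 'M[K]_3) : Prop :=
  g \in unitmx /\ forall i j, g i j = 0 \/ g i j = 1.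
Definition inGamma_c (gam g : 'M[K]_3) : Prop := inGamma g /\ g *m gam = gam *m g.

Definition is_H (g : 'M[K]_3) (H : form3) : Prop := fsubst Tform g = Tform + H ^+ 2.
(* Q' = gamma(Q) := Q^(gamma^-1) + H_(gamma^-1) *)
Definition actQ (g : 'M[K]_3) (Q Q' : form3) : Prop :=
  is_H (invmx g) (Q' - fsubst Q (invmx g)).
End Quartics.
Definition inD (K : fieldType) (q : nat) (gam : 'M[K]_3) (Q : form3 K) : Prop :=
  inQset Q /\ actQ gam Q (frob_form q Q).

From HB Require Import structures.
From mathcomp Require Import all_boot all_order all_algebra.
From mathcomp Require Import mpoly.
From mathcomp Require Import ring.
Import GRing.Theory.
Local Open Scope ring_scope.
Set Implicit Arguments. Unset Strict Implicit. Unset Printing Implicit Defensive.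

(* In characteristic 2 the restriction of Q^2 - xyz(x+y+z) to a line is a square exactly when
   the restriction of xyz(x+y+z) is, and comparing partial derivatives shows that this happens
   exactly for the seven lines defined over F_2. So phi carries the bitangents of C to these
   lines, and a projectivity permuting them is a scalar multiple of an element rho of
   Gamma = PGL_3(F_2). The map phi^-1 rho phi is defined over k iff rho commutes with
   gamma = sigma(phi) phi^-1, and it carries C_Q to C_Q' iff rho(Q) = Q': the factor by which it
   rescales the equation of C_Q' is fixed by the Frobenius, hence equal to 1. *)

Lemma ord3P (i : 'I_3) : [\/ i = i0, i = i1 | i = i2].
Proof.
by case: i => [[|[|[|//]]] ?]; [constructor 1|constructor 2|constructor 3]; apply/val_inj.
Qed.

Lemma big_ord3 (R : nmodType) (F : 'I_3 -> R) : \sum_(j < 3) F j = F i0 + F i1 + F i2.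
Proof.
by rewrite !big_ord_recl big_ord0 addr0 addrA; congr (F _ + F _ + F _); apply/val_inj.
Qed.

Section Substitution.
Variable K : fieldType.
Implicit Types (F G H : form3 K) (a b g : 'M[K]_3).

Lemma comp_mpolyA n k l (p : {mpoly K[n]}) (l1 : n.-tuple {mpoly K[k]})
    (l2 : k.-tuple {mpoly K[l]}) :
  (p \mPo l1) \mPo l2 = p \mPo [tuple tnth l1 i \mPo l2 | i < n].
Proof.
rewrite (comp_mpolyEX p l1) (comp_mpolyEX p) raddf_sum /=.
apply: eq_bigr => mo _; rewrite comp_mpolyZ !comp_mpolyX rmorph_prod; congr (_ *: _).
by apply: eq_bigr => i _; rewrite rmorphXn tnth_map tnth_ord_tuple.
Qed.

Lemma fsubstZ c F g : fsubst (c *: F) g = c *: fsubst F g.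
Proof. exact: comp_mpolyZ. Qed.

Lemma fsubstB F G g : fsubst (F - G) g = fsubst F g - fsubst G g.
Proof. exact: raddfB. Qed.

Lemma fsubstX F n g : fsubst (F ^+ n) g = fsubst F g ^+ n.
Proof. exact: rmorphXn. Qed.

Lemma fsubst_XU g i : fsubst 'X_i g = row_form g i.
Proof. by rewrite /fsubst comp_mpolyXU -tnth_nth tnth_map tnth_ord_tuple. Qed.

Lemma row_form_mulmx a b i :
  row_form a i \mPo [tuple row_form b j | j < 3] = row_form (a *m b) i.
Proof.
rewrite /row_form raddf_sum /=.
under eq_bigr => j _ do
  rewrite comp_mpolyZ comp_mpolyXU -tnth_nth tnth_map tnth_ord_tuple scaler_sumr.
rewrite exchange_big; apply: eq_bigr => k _ /=.
by rewrite mxE scaler_suml; apply: eq_bigr => j _; rewrite scalerA.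
Qed.

Lemma fsubst_mulmx F a b : fsubst (fsubst F a) b = fsubst F (a *m b).
Proof.
rewrite /fsubst comp_mpolyA; congr comp_mpoly; apply: eq_from_tnth => i.
by rewrite !tnth_map !tnth_ord_tuple row_form_mulmx.
Qed.

Lemma row_form_scalar c i : row_form (c%:M : 'M[K]_3) i = c *: 'X_i.
Proof.
rewrite /row_form (bigD1 i) //= big1 ?addr0 => [|j /negPf ji]; rewrite mxE.
  by rewrite eqxx mulr1n.
by rewrite eq_sym ji scale0r.
Qed.

Lemma fsubst1 F : fsubst F 1%:M = F.
Proof.
rewrite /fsubst -[RHS](comp_mpoly_id F); congr comp_mpoly.
by apply: eq_from_tnth => i; rewrite !tnth_map !tnth_ord_tuple row_form_scalar scale1r.
Qed.

Lemma fsubst_scalar d F c : homogeneous d F -> fsubst F c%:M = c ^+ d *: F.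
Proof.
move=> hF; rewrite /fsubst comp_mpolyEX [in RHS](mpolyE F) scaler_sumr !big_seq.
apply: eq_bigr => mo moF; rewrite comp_mpolyX scalerA mulrC -scalerA; congr (_ *: _).
under eq_bigr => i _ do rewrite tnth_map tnth_ord_tuple row_form_scalar exprZn.
rewrite scaler_prod mpolyXE_id prodrXr -(dhomogP _ _ _ hF mo moF) /=.
by rewrite mdegE.
Qed.

Lemma fsubst_Tform_scalar c : fsubst (Tform K) c%:M = c ^+ 4 *: Tform K.
Proof.
rewrite /Tform /vx /vy /vz /fsubst !rmorphM !rmorphD /= -!/(fsubst _ _).
rewrite !fsubst_XU !row_form_scalar.
by rewrite -!mul_mpolyC rmorphXn /=; ring.
Qed.

Lemma invmxM a b : a \in unitmx -> b \in unitmx -> invmx (a *m b) = invmx b *m invmx a.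
Proof.
move=> au bu; have inv_ab : invmx b *m invmx a *m (a *m b) = 1%:M.
  by rewrite mulmxA (mulmxKV au) mulVmx.
by rewrite -[LHS]mul1mx -inv_ab -mulmxA mulmxV ?mulmx1 // unitmx_mul au bu.
Qed.

Lemma maps_curve_inv g (F1 F2 : form3 K) : maps_curve g F1 F2 -> maps_curve (invmx g) F2 F1.
Proof.
move=> [gu [c [c0 hc]]]; split; first by rewrite unitmx_inv.
exists c^-1; split; first by rewrite invr_eq0.
by rewrite invmxK -(scalerK c0 F2) -hc fsubstZ fsubst_mulmx mulVmx // fsubst1.
Qed.

Lemma maps_curve_mulmx a b (F1 F2 F3 : form3 K) :
  maps_curve a F1 F2 -> maps_curve b F2 F3 -> maps_curve (b *m a) F1 F3.
Proof.
move=> [au [c [c0 hc]]] [bu [d [d0 hd]]]; split; first by rewrite unitmx_mul bu au.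
exists (c * d); split; first by rewrite mulf_neq0.
by rewrite invmxM // -fsubst_mulmx hc fsubstZ hd scalerA.
Qed.

Lemma maps_curve_scale d c g (F1 F2 : form3 K) : homogeneous d F1 -> c != 0 ->
  maps_curve g F1 F2 -> maps_curve (c *: g) F1 F2.
Proof.
move=> hF c0 [gu [k [k0 hk]]]; split; first by rewrite unitmxZ ?unitfE.
exists (c^-1 ^+ d * k); split; first by rewrite mulf_neq0 // expf_neq0 // invr_eq0.
rewrite invmxZ ?unitmxZ ?unitfE // -mul_scalar_mx.
by rewrite -fsubst_mulmx (fsubst_scalar _ hF) fsubstZ hk scalerA.
Qed.

End Substitution.

Lemma sqrrD_pchar2 (R : comNzRingType) (x y : R) :
  (2 \in [pchar R])%N -> (x + y) ^+ 2 = x ^+ 2 + y ^+ 2.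
Proof. by move=> ch2; rewrite sqrrD mulr2n addrr_pchar2 // addr0. Qed.

Definition j0 : 'I_2 := @Ordinal 2 0 isT.
Definition j1 : 'I_2 := @Ordinal 2 1 isT.

Section Restriction.
Variable K : fieldType.
Implicit Types (F : form3 K) (A B D P : 'cV[K]_3).

Definition lin2 A B (i : 'I_3) : {mpoly K[2]} := A i 0 *: 'X_j0 + B i 0 *: 'X_j1.

Lemma restrictE F A B : restrict F A B = F \mPo [tuple lin2 A B i | i < 3].
Proof. by []. Qed.

Lemma restrict_fsubst F g A B : restrict (fsubst F g) A B = restrict F (g *m A) (g *m B).
Proof.
rewrite !restrictE /fsubst comp_mpolyA; congr comp_mpoly; apply: eq_from_tnth => i.
rewrite !tnth_map !tnth_ord_tuple /row_form raddf_sum /= /lin2 !mxE.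
under eq_bigr => j _ do
  rewrite comp_mpolyZ comp_mpolyXU -tnth_nth tnth_map tnth_ord_tuple scalerDr !scalerA.
by rewrite big_split /= -!scaler_suml.
Qed.

Lemma restrict_Tform A B :
  restrict (Tform K) A B = lin2 A B i0 * lin2 A B i1 * lin2 A B i2 *
                           (lin2 A B i0 + lin2 A B i1 + lin2 A B i2).
Proof.
rewrite restrictE /Tform /vx /vy /vz !rmorphM !rmorphD /= !comp_mpolyXU.
by rewrite -!tnth_nth !tnth_map !tnth_ord_tuple.
Qed.

Lemma mderivXU (i j : 'I_2) : ('X_i : {mpoly K[2]})^`M(j) = (i == j)%:R.
Proof.
rewrite mderivX mnm1E; case: eqP => [->|_]; last by rewrite scale0r.
have -> : (U_(j) - U_(j) = 0)%MM by apply/mnmP => k; rewrite !mnmE subnn.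
by rewrite scale1r mpolyX0.
Qed.

Definition Tform_deriv D P : K :=
  D i0 0 * P i1 0 * P i2 0 * (P i0 0 + P i1 0 + P i2 0)
  + D i1 0 * P i0 0 * P i2 0 * (P i0 0 + P i1 0 + P i2 0)
  + D i2 0 * P i0 0 * P i1 0 * (P i0 0 + P i1 0 + P i2 0)
  + (D i0 0 + D i1 0 + D i2 0) * P i0 0 * P i1 0 * P i2 0.

Lemma restrict_Tform_deriv A B j (v : 'I_2 -> K) :
  ((restrict (Tform K) A B)^`M(j)).@[v] =
  Tform_deriv (if j == j0 then A else B) (v j0 *: A + v j1 *: B).
Proof.
rewrite restrict_Tform !mderivM !mderivD /lin2 !mderivZ !mderivXU.
have [->|->] : j = j0 \/ j = j1 by case: j => [[|[|//]] ?]; [left|right]; apply/val_inj.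
all: rewrite /Tform_deriv /= !mxE !(mevalD, mevalM, mevalZ, mevalXU, meval1, meval0); ring.
Qed.

End Restriction.

Section Bitangents.
Variable K : fieldType.
Hypothesis ch2 : (2 \in [pchar K])%N.
Implicit Types (F H : form3 K) (l : 'rV[K]_3).

Lemma pchar_mpoly n : (2 \in [pchar {mpoly K[n]}])%N.
Proof. exact: (rmorph_pchar (@mpolyC n K)). Qed.

Lemma mderiv_sqr n (G : {mpoly K[n]}) j : (G ^+ 2)^`M(j) = 0.
Proof. by rewrite expr2 mderivM mulrC addrr_pchar2 // pchar_mpoly. Qed.

Lemma bitangent_add_sqr F H l : bitangent (F + H ^+ 2) l <-> bitangent F l.
Proof.
have sqr_shift (X Y : {mpoly K[2]}) :
    (exists G, X = G ^+ 2) -> exists G, X + Y ^+ 2 = G ^+ 2.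
  by case=> G ->; exists (G + Y); rewrite sqrrD_pchar2 // pchar_mpoly.
split=> -[l0 [P0 [P1 [e0 e1 rk sq]]]]; split=> //; exists P0, P1; split=> //;
  move: sq; rewrite !restrictE rmorphD rmorphXn -!restrictE; last exact: sqr_shift.
move/(sqr_shift _ (restrict H P0 P1)).
by rewrite -addrA addrr_pchar2 ?addr0 // pchar_mpoly.
Qed.

Lemma bitangent_CQ Q l : bitangent (CQ Q) l <-> bitangent (Tform K) l.
Proof. by rewrite /CQ oppr_pchar2 ?pchar_mpoly // addrC bitangent_add_sqr. Qed.

Hypothesis sqrtK : forall x : K, exists r, r ^+ 2 = x.

Lemma bitangent_maps_curve h F1 F2 l :
  maps_curve h F1 F2 -> bitangent F1 l -> bitangent F2 (l *m invmx h).
Proof.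
move=> [hu [c [c0 hc]]] [l0 [P0 [P1 [e0 e1 rk [G hG]]]]]; split.
  by apply: contra l0 => /eqP l_h0; rewrite -[l](mulmxKV hu) l_h0 mul0mx.
exists (h *m P0), (h *m P1); split; rewrite ?mulmxA ?mulmxKV //.
  rewrite -mul_mx_row -mxrank_tr trmx_mul mxrankMfree ?mxrank_tr //.
  by rewrite row_free_unit unitmx_tr.
have [r hr] := sqrtK c^-1; exists (r *: G).
have -> : F2 = c^-1 *: fsubst F1 (invmx h) by rewrite hc scalerK.
rewrite restrictE comp_mpolyZ -restrictE restrict_fsubst !mulmxA mulVmx // !mul1mx.
by rewrite hG exprZn hr.
Qed.

End Bitangents.

Lemma mx_neq0P (R : nmodType) m n (M : 'M[R]_(m, n)) : M != 0 -> exists i j, M i j != 0.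
Proof.
move=> M0; suff /existsP [i /existsP [j Mij]] : [exists i, exists j, M i j != 0].
  by exists i, j.
apply: contraNT M0 => /existsPn M0; apply/eqP/matrixP => i j.
by move/existsPn/(_ j)/negbNE/eqP: (M0 i); rewrite mxE.
Qed.

Section CrossProduct.
Variable K : fieldType.
Implicit Types (A B : 'cV[K]_3) (l : 'rV[K]_3).

Definition minor2 A B (i j : 'I_3) : K := A i 0 * B j 0 - A j 0 * B i 0.

Definition cross A B : 'rV[K]_3 :=
  \row_k (if k == i0 then minor2 A B i1 i2
          else if k == i1 then minor2 A B i2 i0 else minor2 A B i0 i1).

Lemma cross_mulmx A B : cross A B *m A = 0 /\ cross A B *m B = 0.
Proof.
by split; apply/rowP => k; rewrite ord1 !mxE big_ord3 !mxE /= /minor2; ring.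
Qed.

Lemma det_mx2 (M : 'M[K]_2) : \det M = M 0 0 * M 1 1 - M 0 1 * M 1 0.
Proof.
rewrite (expand_det_row _ 0) !big_ord_recl big_ord0 addr0 /cofactor !det_mx11 !mxE /=.
rewrite expr0 expr1 mul1r mulN1r mulrN.
by congr (M _ _ * M _ _ - M _ _ * M _ _); apply/val_inj.
Qed.

Lemma row_mx_colE A B r (c : 'I_2) : row_mx A B r c = if c == 0 then A r 0 else B r 0.
Proof.
rewrite mxE; case: splitP => j; rewrite [j]ord1; case: c => [[|[|//]] ?] //=.
Qed.

Lemma minor2_neq0_rank A B i j : minor2 A B i j != 0 -> \rank (row_mx A B) = 2.
Proof.
move=> d0; pose f (r : 'I_2) := if r == 0 then i else j.
have sub_rank : (\rank (rowsub f (row_mx A B)) <= \rank (row_mx A B))%N.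
  by rewrite rowsubE mxrankM_maxr.
have sub_unit : rowsub f (row_mx A B) \in unitmx.
  by rewrite unitmxE unitfE det_mx2 ![rowsub _ _ _ _]mxE !row_mx_colE /f /= [B i 0 * _]mulrC.
rewrite (mxrank_unit sub_unit) in sub_rank.
by apply/eqP; rewrite eqn_leq rank_leq_col.
Qed.

Lemma cross_eq0_minor2 A B : cross A B = 0 -> forall i j, minor2 A B i j = 0.
Proof.
move=> /rowP n0 i j.
have [m12 m20 m01] : [/\ minor2 A B i1 i2 = 0, minor2 A B i2 i0 = 0 & minor2 A B i0 i1 = 0].
  by split; [move: (n0 i0) | move: (n0 i1) | move: (n0 i2)]; rewrite !mxE.
have minor2C k r : minor2 A B r k = - minor2 A B k r by rewrite /minor2; ring.
have minor2ii k : minor2 A B k k = 0 by rewrite /minor2 subrr.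
case: (ord3P i) => ->; case: (ord3P j) => ->; rewrite ?minor2ii ?m12 ?m20 ?m01 //.
all: by rewrite minor2C ?m12 ?m20 ?m01 oppr0.
Qed.

Lemma rank_row_mx_cross A B : \rank (row_mx A B) = 2 -> cross A B != 0.
Proof.
move=> rk; apply/eqP => /cross_eq0_minor2 minor0.
suff : (\rank (row_mx A B) <= 1)%N by rewrite rk.
have rank_mul (C : 'cV[K]_3) (D : 'rV[K]_2) : (\rank (C *m D) <= 1)%N.
  exact: leq_trans (mxrankM_maxl _ _) (rank_leq_col _).
have [A0|/mx_neq0P [k [z Ak]]] := eqVneq A 0.
  by rewrite (_ : row_mx A B = B *m row_mx 0 1%:M) // mul_mx_row mulmx0 mulmx1 A0.
rewrite [z]ord1 in Ak.
suff -> : row_mx A B = A *m row_mx 1%:M (B k 0 / A k 0)%:M by [].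
rewrite mul_mx_row mulmx1 mul_mx_scalar; congr row_mx.
apply/colP => r; rewrite !mxE; apply: (mulfI Ak).
have /eqP := minor0 k r; rewrite subr_eq0 /minor2 => /eqP ->.
by field.
Qed.

Lemma rker_rank2 l A B : l *m A = 0 -> l *m B = 0 -> \rank (row_mx A B) = 2 ->
  exists a, l = a *: cross A B.
Proof.
move=> lA lB rk; have [nA nB] := cross_mulmx A B.
have ker_of (u : 'rV[K]_3) : u *m A = 0 -> u *m B = 0 -> (u <= kermx (row_mx A B))%MS.
  by move=> uA uB; apply/sub_kermxP; rewrite mul_mx_row uA uB row_mx0.
have n_ker : (cross A B == kermx (row_mx A B))%MS.
  case: (mxrank_leqif_eq (ker_of _ nA nB)) => _ <-.
  by rewrite mxrank_ker rk rank_rV rank_row_mx_cross.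
have /submxP [D ->] : (l <= cross A B)%MS by rewrite (eqmxP n_ker) ker_of.
by exists (D 0 0); rewrite {1}[D]mx11_scalar mul_scalar_mx.
Qed.

End CrossProduct.

Lemma mulmx_unit_eq0 (K : fieldType) m (u : 'M[K]_(m, 3)) h :
  h \in unitmx -> (u *m h == 0) = (u == 0).
Proof.
move=> hu; apply/eqP/eqP => [uh0|->]; last by rewrite mul0mx.
by rewrite -[u](mulmxK hu) uh0 mul0mx.
Qed.

Lemma line_basis (K : fieldType) (l : 'rV[K]_3) : l != 0 ->
  exists A B : 'cV[K]_3, [/\ l *m A = 0, l *m B = 0 & \rank (row_mx A B) = 2].
Proof.
move=> /mx_neq0P [z [k lk]]; rewrite [z]ord1 in lk.
pose v i : 'cV[K]_3 := l 0 i *: delta_mx k 0 - l 0 k *: delta_mx i 0.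
have lv i : l *m v i = 0.
  by rewrite mulmxBr -!scalemxAr -!colE; apply/rowP => z'; rewrite !mxE mulrC subrr.
pose i := lift k (0 : 'I_2); pose j := lift k (1 : 'I_2).
exists (v i), (v j); split=> //; apply: (@minor2_neq0_rank _ _ _ i j).
have [ki kj] : (k == i) = false /\ (k == j) = false by rewrite !(negPf (neq_lift _ _)).
have ij : (i == j) = false by rewrite (inj_eq lift_inj).
rewrite /minor2 !mxE !eqxx !andbT !(eq_sym _ k) ki kj (eq_sym j i) ij /=.
by rewrite !(mulr0, mulr1, subr0, sub0r, mul0r) oppr0 mulr0 subr0 mulrNN mulf_neq0.
Qed.

Section F2Lines.
Variable K : fieldType.
Implicit Types (l n : 'rV[K]_3) (A B : 'cV[K]_3).

(* The line l = 0 is defined over F_2: l is proportional to its entrywise square, so its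
   nonzero coordinates are all equal. *)
Definition f2_line l : Prop := l != 0 /\ exists c : K, forall k, l 0 k ^+ 2 = c * l 0 k.

Lemma sqr_eq_mulP (x c : K) : x ^+ 2 = c * x <-> x = 0 \/ x = c.
Proof.
split=> [/eqP|[]->]; rewrite ?expr2 ?mulr0 //.
by rewrite -subr_eq0 -mulrBl mulf_eq0 subr_eq0 orbC => /orP[] /eqP; [left|right].
Qed.

Lemma f2_lineZ a l : a != 0 -> f2_line l -> f2_line (a *: l).
Proof.
move=> a0 [l0 [c hc]]; split; first by rewrite scaler_eq0 negb_or a0.
by exists (a * c) => k; rewrite mxE exprMn hc; ring.
Qed.

Lemma f2_line_of_relations n : n != 0 ->
  (forall i j, n 0 i * n 0 j * (n 0 i - n 0 j) = 0) -> f2_line n.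
Proof.
move=> n0 rel; split=> //; have [z [k nk]] := mx_neq0P n0; rewrite [z]ord1 in nk.
exists (n 0 k) => i; apply/eqP; rewrite -subr_eq0 -(mulIr_eq0 _ (mulIf nk)).
by rewrite -(rel i k); apply/eqP; ring.
Qed.

Lemma f2_lineZE a l : a != 0 -> f2_line (a *: l) <-> f2_line l.
Proof.
move=> a0; split=> [|/(f2_lineZ a0)//].
by move/(f2_lineZ (invr_neq0 a0)); rewrite scalerA mulVf // scale1r.
Qed.

Hypothesis ch2 : (2 \in [pchar K])%N.

Lemma f2_line_mulmx rho l : inGamma rho -> f2_line l -> f2_line (l *m rho).
Proof.
move=> [ru r01] [l0 [c hc]]; split; first by rewrite mulmx_unit_eq0.
exists c => k; rewrite !mxE -(pFrobenius_autE ch2) rmorph_sum mulr_sumr.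
apply: eq_bigr => i _; rewrite rmorphM /= !pFrobenius_autE hc -mulrA.
by case: (r01 i k) => ->; rewrite ?expr0n ?expr1n.
Qed.

End F2Lines.

Lemma sqr_of_F2_relation (R : comNzRingType) (x y z a b c : R) : (2 \in [pchar R])%N ->
  [/\ a = 0 \/ a = 1, b = 0 \/ b = 1 & c = 0 \/ c = 1] -> ~ [/\ a = 0, b = 0 & c = 0] ->
  a * x + b * y + c * z = 0 -> exists G, x * y * z * (x + y + z) = G ^+ 2.
Proof.
move=> ch2 [ha hb hc] abc0.
have neg_sqr (u G : R) : u = - G ^+ 2 -> exists G, u = G ^+ 2.
  by move=> ->; exists G; rewrite oppr_pchar2.
case: ha hb hc abc0 => -> [] -> [] -> abc0; rewrite ?mul0r ?mul1r ?addr0 ?add0r //.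
- by case: abc0.
- by move=> ->; exists 0; ring.
- by move=> ->; exists 0; ring.
- by move/eqP; rewrite addr_eq0 => /eqP ->; apply: (neg_sqr _ (x * z)); ring.
- by move=> ->; exists 0; ring.
- by move/eqP; rewrite addr_eq0 => /eqP ->; apply: (neg_sqr _ (y * z)); ring.
- by move/eqP; rewrite addr_eq0 => /eqP ->; apply: (neg_sqr _ (y * z)); ring.
by move=> ->; exists 0; ring.
Qed.

Section TformBitangents.
Variable K : fieldType.
Hypothesis ch2 : (2 \in [pchar K])%N.
Implicit Types (l : 'rV[K]_3) (A B : 'cV[K]_3).

(* A square has vanishing partial derivatives in characteristic 2; at the point of the
   line with vanishing k-th coordinate only the k-th term of the derivative of T remains. *)
Lemma square_restrict_Tform_axis A B k r : (exists G, restrict (Tform K) A B = G ^+ 2) ->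
  (forall D, Tform_deriv D (A k 0 *: B - B k 0 *: A) = D k 0 * r) ->
  (A k 0 = 0 -> B k 0 = 0 -> r = 0) -> r = 0.
Proof.
move=> [G sqG] hD hz.
have deriv0 j : Tform_deriv (if j == j0 then A else B) (A k 0 *: B - B k 0 *: A) = 0.
  have := restrict_Tform_deriv A B j (fun j => if j == j0 then - B k 0 else A k 0).
  by rewrite sqG mderiv_sqr // meval0 /= scaleNr addrC => <-.
move: (deriv0 j0) (deriv0 j1); rewrite /= !hD => /eqP Ar /eqP Br.
have [A0|An] := eqVneq (A k 0) 0; last by move: Ar; rewrite mulf_eq0 (negPf An) => /eqP.
have [B0|Bn] := eqVneq (B k 0) 0; last by move: Br; rewrite mulf_eq0 (negPf Bn) => /eqP.
exact: hz.
Qed.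

Lemma square_restrict_Tform_cross A B : (exists G, restrict (Tform K) A B = G ^+ 2) ->
  forall i j, cross A B 0 i * cross A B 0 j * (cross A B 0 i - cross A B 0 j) = 0.
Proof.
move=> sq; set n := cross A B.
have W12 : n 0 i1 * n 0 i2 * (n 0 i1 - n 0 i2) = 0.
  apply: (square_restrict_Tform_axis (k := i0) sq) => [D|A0 B0].
    by rewrite /Tform_deriv /n /cross !mxE /= /minor2; ring.
  by rewrite /n /cross !mxE /= /minor2 A0 B0; ring.
have W20 : n 0 i2 * n 0 i0 * (n 0 i2 - n 0 i0) = 0.
  apply: (square_restrict_Tform_axis (k := i1) sq) => [D|A1 B1].
    by rewrite /Tform_deriv /n /cross !mxE /= /minor2; ring.
  by rewrite /n /cross !mxE /= /minor2 A1 B1; ring.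
have W01 : n 0 i0 * n 0 i1 * (n 0 i0 - n 0 i1) = 0.
  apply: (square_restrict_Tform_axis (k := i2) sq) => [D|A2 B2].
    by rewrite /Tform_deriv /n /cross !mxE /= /minor2; ring.
  by rewrite /n /cross !mxE /= /minor2 A2 B2; ring.
have mirror i j : n 0 j * n 0 i * (n 0 j - n 0 i) = - (n 0 i * n 0 j * (n 0 i - n 0 j)).
  by ring.
move=> i j; case: (ord3P i) => ->; case: (ord3P j) => ->;
  by rewrite ?subrr ?mulr0 ?W12 ?W20 ?W01 // mirror ?W12 ?W20 ?W01 oppr0.
Qed.

Lemma lin2_relation l A B : l *m A = 0 -> l *m B = 0 ->
  l 0 i0 *: lin2 A B i0 + l 0 i1 *: lin2 A B i1 + l 0 i2 *: lin2 A B i2 = 0.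
Proof.
move=> /rowP/(_ 0) lA /rowP/(_ 0) lB.
rewrite !mxE big_ord3 in lA; rewrite !mxE big_ord3 in lB.
have -> : l 0 i0 *: lin2 A B i0 + l 0 i1 *: lin2 A B i1 + l 0 i2 *: lin2 A B i2 =
    (l 0 i0 * A i0 0 + l 0 i1 * A i1 0 + l 0 i2 * A i2 0) *: 'X_j0 +
    (l 0 i0 * B i0 0 + l 0 i1 * B i1 0 + l 0 i2 * B i2 0) *: 'X_j1.
  by rewrite /lin2 -!mul_mpolyC !rmorphD !rmorphM /=; ring.
by rewrite lA lB !scale0r addr0.
Qed.

Lemma bitangent_TformP l : bitangent (Tform K) l <-> f2_line l.
Proof.
split=> [[l0 [A [B [lA lB rk sq]]]] | [l0 [c hc]]].
  have [a la] := rker_rank2 lA lB rk; rewrite la in l0 *.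
  apply: f2_lineZ; first by move: l0; rewrite scaler_eq0 negb_or => /andP[].
  exact: f2_line_of_relations (rank_row_mx_cross rk) (square_restrict_Tform_cross sq).
have c0 : c != 0.
  apply: contra l0 => /eqP c0; apply/eqP/rowP => k; rewrite mxE.
  by have /eqP := hc k; rewrite c0 mul0r expf_eq0 => /andP[_ /eqP].
have [A [B [lA lB rk]]] := line_basis l0.
split=> //; exists A, B; split=> //; rewrite restrict_Tform.
pose m k : {mpoly K[2]} := (c^-1 * l 0 k)%:MP.
have m01 k : m k = 0 \/ m k = 1.
  rewrite /m; case/sqr_eq_mulP: (hc k) => ->.
    by left; rewrite mulr0 mpolyC0.
  by right; rewrite mulVf // mpolyC1.
apply: (@sqr_of_F2_relation _ _ _ _ (m i0) (m i1) (m i2) (pchar_mpoly ch2 2)).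
- by split; apply: m01.
- case=> m0 m1 m2; move/negP: l0; apply; apply/eqP/rowP => k; rewrite mxE.
  have : m k = 0 by case: (ord3P k) => ->.
  by move/eqP; rewrite mpolyC_eq0 mulf_eq0 invr_eq0 (negPf c0) => /eqP.
by rewrite /m !mul_mpolyC -!scalerA -!scalerDr lin2_relation // scaler0.
Qed.

End TformBitangents.

Section F2LineStabilizer.
Variable K : fieldType.
Hypothesis ch2 : (2 \in [pchar K])%N.

Lemma f2_line_stabilizer (h : 'M[K]_3) : h \in unitmx ->
  (forall l, f2_line l -> f2_line (l *m h)) ->
  exists d rho, [/\ d != 0, inGamma rho & h = d *: rho].
Proof.
move=> hu Hh; pose e i : 'rV[K]_3 := delta_mx 0 i.
have e_idem i k : e i 0 k ^+ 2 = e i 0 k.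
  by rewrite mxE; case: (_ && _); rewrite ?expr1n ?expr0n.
have e_neq0 i j : i != j -> (e i + e j) 0 i != 0.
  by move=> ij; rewrite !mxE !eqxx (negPf ij) /= addr0 oner_neq0.
have row_scale i : exists c, forall k, h i k ^+ 2 = c * h i k.
  have /Hh [_ [c hc]] : f2_line (e i).
    split; last by exists 1 => k; rewrite mul1r e_idem.
    by apply/eqP => /rowP/(_ i)/eqP; rewrite !mxE !eqxx oner_eq0.
  by exists c => k; have := hc k; rewrite -rowE !mxE.
have scale_eq i j c c' : i != j -> (forall k, h i k ^+ 2 = c * h i k) ->
    (forall k, h j k ^+ 2 = c' * h j k) -> c = c'.
  move=> ij hc hc'; have /Hh [_ [d hd]] : f2_line (e i + e j).
    split; last by exists 1 => k; rewrite mul1r mxE sqrrD_pchar2 // !e_idem.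
    by apply/eqP => /rowP/(_ i)/eqP; rewrite [X in _ == X]mxE (negPf (e_neq0 _ _ ij)).
  have /eqP : ((c - d) *: e i + (c' - d) *: e j) *m h = 0.
    rewrite mulmxDl -!scalemxAl -!rowE; apply/rowP => k; rewrite !mxE.
    have := hd k; rewrite mulmxDl -!rowE !mxE sqrrD_pchar2 // hc hc' => E.
    by transitivity (c * h i k + c' * h j k - d * (h i k + h j k)); [ring | rewrite E subrr].
  rewrite mulmx_unit_eq0 // => /eqP/rowP coef.
  move: (coef i) (coef j); rewrite !mxE !eqxx (negPf ij) eq_sym (negPf ij) /=.
  rewrite !(mulr1, mulr0, addr0, add0r) => /eqP; rewrite subr_eq0 => /eqP -> /eqP.
  by rewrite subr_eq0 => /eqP.
have [c hc] := row_scale i0.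
have hc_all i k : h i k ^+ 2 = c * h i k.
  have [->|ii0] := eqVneq i i0; first exact: hc.
  by have [ci hci] := row_scale i; rewrite hci (scale_eq _ _ _ _ ii0 hci hc).
have c0 : c != 0.
  apply: contraTneq hu => c0; suff -> : h = 0 by rewrite unitmxE det0 unitr0.
  apply/matrixP => i k; have /eqP := hc_all i k.
  by rewrite c0 mul0r expf_eq0 mxE => /andP[_ /eqP].
exists c, (c^-1 *: h); split=> //; last by rewrite scalerA mulfV // scale1r.
split; first by rewrite unitmxZ // unitfE invr_eq0.
move=> i k; rewrite mxE; case/sqr_eq_mulP: (hc_all i k) => ->.
  by left; rewrite mulr0.
by right; rewrite mulVf.
Qed.

End F2LineStabilizer.

Section Gamma.
Variable K : fieldType.
Hypothesis ch2 : (2 \in [pchar K])%N.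
Local Notation sq := (pFrobenius_aut ch2).

Lemma inGammaE (g : 'M[K]_3) : inGamma g <-> g \in unitmx /\ map_mx sq g = g.
Proof.
have bitE (x : K) : x = 0 \/ x = 1 <-> sq x = x.
  by rewrite pFrobenius_autE -(sqr_eq_mulP x 1) mul1r.
split=> -[gu gE]; split=> //; first by apply/matrixP => i j; rewrite mxE; apply/bitE.
by move=> i j; apply/bitE; rewrite -{2}gE mxE.
Qed.

Lemma inGamma_mulmx (g g' : 'M[K]_3) : inGamma g -> inGamma g' -> inGamma (g *m g').
Proof.
move=> /inGammaE[gu gE] /inGammaE[g'u g'E]; apply/inGammaE.
by rewrite unitmx_mul gu g'u map_mxM gE g'E.
Qed.

Lemma inGamma_invmx (g : 'M[K]_3) : inGamma g -> inGamma (invmx g).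
Proof. by move=> /inGammaE[gu gE]; apply/inGammaE; rewrite unitmx_inv map_invmx gE. Qed.

Lemma f2_line_mulmxE (rho : 'M[K]_3) (l : 'rV[K]_3) :
  inGamma rho -> f2_line (l *m rho) <-> f2_line l.
Proof.
move=> rhoG; have [ru _] := rhoG; split=> [|/(f2_line_mulmx ch2 rhoG)//].
by move/(f2_line_mulmx ch2 (inGamma_invmx rhoG)); rewrite mulmxK.
Qed.

Lemma inGamma_scale_eq (g g' : 'M[K]_3) s t : inGamma g -> inGamma g' -> t != 0 ->
  s *: g = t *: g' -> g = g'.
Proof.
move=> [_ g01] [g'u g'01] t0 E.
have [i [j g'ij]] : exists i j, g' i j != 0.
  by apply: mx_neq0P; apply: contraTneq g'u => ->; rewrite unitmxE det0 unitr0.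
have g'1 : g' i j = 1 by case: (g'01 i j) g'ij => ->; rewrite ?eqxx.
have /eqP := congr1 (fun M : 'M[K]_3 => M i j) E; rewrite !mxE g'1 mulr1.
case: (g01 i j) => ->; first by rewrite mulr0 eq_sym (negPf t0).
by rewrite mulr1 => /eqP st; apply: (scalerI t0); rewrite -[in LHS]st.
Qed.

End Gamma.

Section FrobeniusTwist.
Variable K : fieldType.
Hypothesis ch2 : (2 \in [pchar K])%N.
Variable e : nat.
Local Notation q := (2 ^ e)%N.

Fact frob_is_nmod_morphism : nmod_morphism (frob (K:=K) q).
Proof.
split=> [|x y]; first by rewrite /frob expr0n expn_eq0.
by rewrite /frob exprDn_pchar // pnatX (pnatE _ (isT : prime 2)) ch2.
Qed.

Fact frob_is_monoid_morphism : monoid_morphism (frob (K:=K) q).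
Proof. by split=> [|x y]; rewrite /frob ?expr1n ?exprMn. Qed.

HB.instance Definition _ := GRing.isNmodMorphism.Build K K (frob q) frob_is_nmod_morphism.
HB.instance Definition _ := GRing.isMonoidMorphism.Build K K (frob q) frob_is_monoid_morphism.

Lemma frob_mx_inGamma (g : 'M[K]_3) : inGamma g -> frob_mx q g = g.
Proof.
move=> [_ g01]; apply/matrixP => i j; rewrite mxE.
by case: (g01 i j) => ->; rewrite ?rmorph0 ?rmorph1.
Qed.

Variables (phi gam : 'M[K]_3) (a : K).
Hypotheses (phiu : phi \in unitmx) (gamG : inGamma gam) (a0 : a != 0)
  (phi_twist : frob_mx q phi *m invmx phi = a *: gam).

Let gamu : gam \in unitmx. Proof. by case: gamG. Qed.

Lemma frob_mx_conj X : frob_mx q (invmx phi *m X *m phi) =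
  invmx phi *m (invmx gam *m frob_mx q X *m gam) *m phi.
Proof.
have phiE : frob_mx q phi = a *: (gam *m phi).
  by rewrite -[LHS](mulmxKV phiu) phi_twist scalemxAl.
rewrite /frob_mx !map_mxM map_invmx -/(frob_mx q phi) phiE invmxZ; last first.
  by rewrite unitmxZ ?unitfE // unitmx_mul gamu phiu.
rewrite invmxM // -!scalemxAl -scalemxAr scalerA mulVf // scale1r.
by rewrite !mulmxA.
Qed.

Lemma pgl_over_k_conj rho c : inGamma rho -> rho *m gam = gam *m rho -> c != 0 ->
  pgl_over_k q (c *: (invmx phi *m rho *m phi)).
Proof.
move=> rhoG comm c0; have [rhou _] := rhoG; split.
  by rewrite unitmxZ ?unitfE // !unitmx_mul unitmx_inv phiu rhou.
exists c^-1; split; first by rewrite invr_eq0.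
rewrite scalerA mulVf // scale1r frob_mx_conj frob_mx_inGamma //.
by rewrite -(mulmxA (invmx gam)) comm (mulmxA (invmx gam)) mulVmx // mul1mx.
Qed.

Lemma pgl_over_k_conj_comm rho d : inGamma rho -> d != 0 ->
  pgl_over_k q (d *: (invmx phi *m rho *m phi)) -> rho *m gam = gam *m rho.
Proof.
move=> rhoG d0 [_ [c [c0 E]]]; have [rhou _] := rhoG.
rewrite scalerA /frob_mx map_mxZ -/(frob_mx q _) frob_mx_conj frob_mx_inGamma // in E.
have unconj M : phi *m (invmx phi *m M *m phi) *m invmx phi = M.
  by rewrite !mulmxA mulmxV // mul1mx mulmxK.
have /(congr1 (fun M => gam *m (phi *m M *m invmx phi))) := E.
rewrite -!scalemxAr -!scalemxAl !unconj -!scalemxAr !mulmxA mulmxV // mul1mx => E'.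
apply: (inGamma_scale_eq _ _ (mulf_neq0 c0 d0) E'); exact: inGamma_mulmx.
Qed.

End FrobeniusTwist.

Lemma Tform_deriv_map (K : fieldType) (f : {rmorphism K -> K}) (D P : 'cV[K]_3) :
  Tform_deriv (map_mx f D) (map_mx f P) = f (Tform_deriv D P).
Proof. by rewrite /Tform_deriv !mxE !(rmorphD, rmorphM). Qed.

Section QuarticFamily.
Variable K : fieldType.
Hypothesis ch2 : (2 \in [pchar K])%N.
Implicit Types (Q : form3 K) (rho : 'M[K]_3).

Lemma fsubst_CQ_scalar Q c : homogeneous 2 Q -> fsubst (CQ Q) c%:M = c ^+ 4 *: CQ Q.
Proof.
move=> hQ; rewrite /CQ fsubstB fsubstX (fsubst_scalar _ hQ) fsubst_Tform_scalar.
by rewrite scalerBr exprZn -exprM.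
Qed.

Lemma actQE rho Q Q' : actQ rho Q Q' <-> fsubst (CQ Q) (invmx rho) = CQ Q'.
Proof.
have ch2m := pchar_mpoly ch2 3.
rewrite /actQ /is_H /CQ fsubstB fsubstX !(oppr_pchar2 ch2m) sqrrD_pchar2 //.
set T := Tform K; set T' := fsubst T _; set A := fsubst Q _.
have cancel (X Y : form3 K) : X + (Y + X) = Y.
  by rewrite addrCA addrr_pchar2 // addr0.
split=> [->|E]; first by rewrite addrCA cancel addrC.
by rewrite -(cancel (A ^+ 2) T') addrA E addrAC addrC.
Qed.

Lemma maps_curve_of_actQ rho Q Q' : rho \in unitmx -> actQ rho Q Q' ->
  maps_curve rho (CQ Q) (CQ Q').
Proof.
move=> ru /actQE E; split=> //; exists 1; split; first exact: oner_neq0.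
by rewrite scale1r.
Qed.

Lemma restrict_CQ_deriv Q A B (v : 'I_2 -> K) :
  ((restrict (CQ Q) A B)^`M(j0)).@[v] = - Tform_deriv A (v j0 *: A + v j1 *: B).
Proof.
rewrite restrictE /CQ rmorphB rmorphXn /= -!restrictE mderivB mderiv_sqr // sub0r mevalN.
by rewrite restrict_Tform_deriv.
Qed.

(* The scalar mu by which rho^-1 rescales the equation is detected by the derivative of T at
   R = (0, 1, w); as R is not an F_2-point, squaring everything yields mu^2 = mu. *)
Lemma actQ_of_maps_curve rho d Q Q' (w : K) : inGamma rho -> homogeneous 2 Q ->
  d != 0 -> w * (1 + w) != 0 -> maps_curve (d *: rho) (CQ Q) (CQ Q') -> actQ rho Q Q'.
Proof.
move=> rhoG hQ d0 w0 [_ [c [c0 hc]]]; have [ru _] := rhoG.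
have /inGammaE [_ sr'] := inGamma_invmx ch2 rhoG; set r' := invmx rho in sr' *.
pose mu := c * d ^+ 4.
have mu0 : mu != 0 by rewrite mulf_neq0 // expf_neq0.
have H1 : fsubst (CQ Q) r' = mu *: CQ Q'.
  move: hc; rewrite invmxZ ?unitmxZ ?unitfE // -mul_scalar_mx -fsubst_mulmx.
  rewrite fsubst_CQ_scalar // fsubstZ exprVn => /(congr1 (fun F => d ^+ 4 *: F)).
  by rewrite !scalerA mulfV ?expf_neq0 // scale1r mulrC.
have deriv_eq u R : Tform_deriv (r' *m u) (r' *m R) = mu * Tform_deriv u R.
  have := congr1 (fun F => ((restrict F u R)^`M(j0)).@[fun j => (j != j0)%:R]) H1.
  rewrite /= restrict_fsubst restrict_CQ_deriv restrictE comp_mpolyZ -restrictE mderivZ.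
  by rewrite mevalZ restrict_CQ_deriv /= !scale0r !add0r !scale1r mulrN => /oppr_inj.
pose u : 'cV[K]_3 := \col_i (i == i0)%:R.
pose R : 'cV[K]_3 := \col_i (if i == i0 then 0 else if i == i1 then 1 else w).
have uR : Tform_deriv u R = w * (1 + w) by rewrite /Tform_deriv !mxE /=; ring.
have sX : pFrobenius_aut ch2 (Tform_deriv u R) != 0 by rewrite uR pFrobenius_autE expf_neq0.
have /eqP : pFrobenius_aut ch2 (mu * Tform_deriv u R) =
             mu * pFrobenius_aut ch2 (Tform_deriv u R).
  by rewrite -deriv_eq -!Tform_deriv_map !map_mxM sr' deriv_eq.
rewrite rmorphM /= (inj_eq (mulIf sX)).
rewrite pFrobenius_autE expr2 -[X in _ == X]mulr1 (inj_eq (mulfI mu0)) => /eqP mu1.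
by apply/actQE; rewrite H1 mu1 scale1r.
Qed.

End QuarticFamily.

Section Descent.
Variable K : fieldType.
Hypothesis ch2 : (2 \in [pchar K])%N.
Hypothesis sqrtK : forall x : K, exists r, r ^+ 2 = x.
Variables (e : nat) (F Q : form3 K) (phi gam : 'M[K]_3) (a : K).
Hypotheses (Hphi : maps_curve phi F (CQ Q)) (gamG : inGamma gam) (a0 : a != 0)
  (phi_twist : frob_mx (2 ^ e) phi *m invmx phi = a *: gam).
Local Notation q := (2 ^ e)%N.

Let phiu : phi \in unitmx. Proof. by case: Hphi. Qed.

Lemma bitangent_phiP l : bitangent F l <-> f2_line (l *m invmx phi).
Proof.
rewrite -(bitangent_TformP ch2) -(bitangent_CQ ch2 Q); split=> [|bl].
  exact: bitangent_maps_curve.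
by have := bitangent_maps_curve sqrtK (maps_curve_inv Hphi) bl; rewrite invmxK mulmxKV.
Qed.

Lemma f2_line_stabilizer_conj g : g \in unitmx ->
  (forall l, f2_line l -> f2_line (l *m (phi *m g *m invmx phi))) ->
  exists d rho, [/\ d != 0, inGamma rho & g = d *: (invmx phi *m rho *m phi)].
Proof.
move=> gu /(f2_line_stabilizer ch2) [|d [rho [d0 rhoG hE]]].
  by rewrite !unitmx_mul gu phiu unitmx_inv.
exists d, rho; split=> //; rewrite scalemxAl scalemxAr -hE.
by rewrite !mulmxA mulVmx // mul1mx mulmxKV.
Qed.

Lemma aut_k_bitangentsP g : aut_k_bitangents q F g <->
  exists rho, inGamma_c gam rho /\ pgl_eq g (invmx phi *m rho *m phi).
Proof.
split=> [[gk pres] | [rho [[rhoG comm] [c [c0 ->]]]]].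
  have gu : g \in unitmx by case: gk.
  have [|d [rho [d0 rhoG gE]]] := f2_line_stabilizer_conj gu.
    move=> l fl; rewrite !mulmxA; apply/bitangent_phiP/pres.
    by rewrite mulmxK //; apply/bitangent_phiP; rewrite mulmxK.
  exists rho; split; last by exists d.
  by split=> //; apply: (pgl_over_k_conj_comm ch2 phiu gamG a0 phi_twist rhoG d0); rewrite -gE.
split.
  by apply: (pgl_over_k_conj ch2 phiu gamG a0 phi_twist rhoG comm c0).
have [rhou _] := rhoG.
move=> l; rewrite !bitangent_phiP invmxZ; last first.
  by rewrite unitmxZ ?unitfE // !unitmx_mul unitmx_inv phiu rhou.
rewrite !invmxM ?unitmx_mul ?unitmx_inv ?phiu ?rhou // invmxK -scalemxAr -scalemxAl.
rewrite !mulmxA mulmxK // f2_lineZE ?invr_eq0 //.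
by rewrite (f2_line_mulmxE ch2 _ (inGamma_invmx ch2 rhoG)).
Qed.

Lemma isom_kP F' Q' (w : K) g : homogeneous 4 F -> homogeneous 2 Q -> w * (1 + w) != 0 ->
  maps_curve phi F' (CQ Q') ->
  isom_k q F F' g <-> exists rho, (inGamma_c gam rho /\ actQ rho Q Q') /\
                                  pgl_eq g (invmx phi *m rho *m phi).
Proof.
move=> hF hQ w0 Hphi'; split=> [[gk mc] | [rho [[[rhoG comm] act] [c [c0 ->]]]]].
  have mcQ := maps_curve_mulmx (maps_curve_mulmx (maps_curve_inv Hphi) mc) Hphi'.
  have gu : g \in unitmx by case: mc.
  have [|d [rho [d0 rhoG gE]]] := f2_line_stabilizer_conj gu.
    move=> l; rewrite -(bitangent_TformP ch2) -(bitangent_CQ ch2 Q').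
    move/(bitangent_maps_curve sqrtK (maps_curve_inv mcQ)).
    by rewrite invmxK (bitangent_CQ ch2) (bitangent_TformP ch2) !mulmxA.
  exists rho; split; last by exists d.
  split.
    split=> //; apply: (pgl_over_k_conj_comm ch2 phiu gamG a0 phi_twist rhoG d0).
    by rewrite -gE.
  apply: (actQ_of_maps_curve ch2 rhoG hQ d0 w0).
  by move: mcQ; rewrite gE -scalemxAl -scalemxAr !mulmxA mulmxV // mul1mx mulmxK.
split; first exact: (pgl_over_k_conj ch2 phiu gamG a0 phi_twist rhoG comm c0).
have [rhou _] := rhoG; apply: (maps_curve_scale hF c0).
have := maps_curve_mulmx (maps_curve_mulmx Hphi (maps_curve_of_actQ ch2 rhou act))
  (maps_curve_inv Hphi').
by rewrite !mulmxA.
Qed.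

End Descent.

Lemma sqrt_of_frob_periodic (K : fieldType) :
  (forall x : K, exists m : nat, (0 < m)%N /\ x ^+ (2 ^ m) = x) ->
  forall x : K, exists r, r ^+ 2 = x.
Proof.
move=> Kalg x; have [m [m0 hm]] := Kalg x; exists (x ^+ (2 ^ m.-1)).
by rewrite -exprM -expnSr prednK.
Qed.

Lemma exists_not_F2 (K : closedFieldType) : (2 \in [pchar K])%N ->
  exists w : K, w * (1 + w) != 0.
Proof.
(* a root w of X^2 - X - 1 has w (1 + w) = 1 *)
move=> ch2; have [w hw] := @solve_monicpoly K 2 (fun _ => 1) isT.
exists w; move: hw; rewrite !big_ord_recl big_ord0 addr0 !mul1r expr0 expr1 /= => hw.
by rewrite mulrDr mulr1 -expr2 hw addrC -addrA addrr_pchar2 // addr0 oner_neq0.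
Qed.

Theorem lemma1p5 (K : closedFieldType) (e q : nat)
  (he : (0 < e)%N) (hq : q = (2 ^ e)%N)
  (char2 : (2 \in [pchar K])%N)
  (Kalg : forall x : K, exists m : nat, (0 < m)%N /\ x ^+ (2 ^ m) = x)
  (F : form3 K)
  (HF : nonsingular_plane_quartic F) (HFk : form_over_k q F) (HFo : ordinary F)
  (gam : 'M[K]_3) (Hgam : inGamma gam)
  (Q : form3 K) (HQ : inD q gam Q)
  (phi : 'M[K]_3) (Hphi : maps_curve phi F (CQ Q))
  (Hphis : pgl_eq (frob_mx q phi *m invmx phi) gam) :
  (forall g : 'M[K]_3,
     aut_k_bitangents q F g <->
     exists rho, inGamma_c gam rho /\ pgl_eq g (invmx phi *m rho *m phi))
  /\
  (forall (F' Q' : form3 K),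
     nonsingular_plane_quartic F' -> form_over_k q F' -> ordinary F' ->
     inQset Q' -> maps_curve phi F' (CQ Q') ->
     forall g : 'M[K]_3,
       isom_k q F F' g <->
       exists rho, (inGamma_c gam rho /\ actQ rho Q Q') /\
                   pgl_eq g (invmx phi *m rho *m phi))
  /\
  (forall g : 'M[K]_3,
     isom_k q F F g <->
     exists rho, (inGamma_c gam rho /\ actQ rho Q Q) /\
                 pgl_eq g (invmx phi *m rho *m phi)).
Proof.
(* Bitangency is defined algebraically. *)
subst q.
have sqrtK := sqrt_of_frob_periodic Kalg.
have [w w0] := exists_not_F2 char2.
have [a [a0 phi_twist]] := Hphis.
have [[hQ _] _] := HQ.
have [[hF _] _] := HF.
have isomP F' Q' g :=
  isom_kP char2 sqrtK Hphi Hgam a0 phi_twist (F' := F') (Q' := Q') g hF hQ w0.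
split; first exact: (aut_k_bitangentsP char2 sqrtK Hphi Hgam a0 phi_twist).
by split=> [F' Q' _ _ _ _ Hphi' g | g]; apply: isomP.
Qed.
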